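(* Assume $192S\le T$. On the event $E$, for every arm $i$ and every integer $n\le 192S$, $n\,\widehat\mu_{i,n}<210c^2\log T$.
   Context: Bandit setup: $k$ arms, arm $i$ a distribution on $[0,1]$ with mean $\mu_i$, $\mu^*:=\max_i\mu_i>0$. $\log$ is the natural logarithm; $c:=3$; $T$ is the overall horizon and $S:=\frac{c^2\log T}{\mu^*}$. Canonical model: a $k\times T$ table $(Y_{i,s})$ of independent entries with $Y_{i,s}$ distributed as arm $i$, the $s$-th pull of arm $i$ yielding $Y_{i,s}$; $\widehat\mu_{i,s}:=\frac1s\sum_{r=1}^sY_{i,r}$ (and $n\widehat\mu_{i,n}:=0$ for $n=0$). Uniform sampling is modeled by independent uniform $U_1,\dots,U_T\in[k]$ (independent of the table). Events: $E_1$: for every integer $r$ with $128kS\le r\le T$ and every arm $i$, the number of $r'\le r$ with $U_{r'}=i$ is at least $\frac{r}{2k}$ and at most $\frac{3r}{2k}$. $E_2$: for every arm $i$ with $\mu_i>\frac{\mu^*}{64}$ and every integer $s$ with $64S\le s\le T$, $|\mu_i-\widehat\mu_{i,s}|\le c\sqrt{\frac{\mu_i\log T}{s}}$. $E_3$: for every arm $j$ with $\mu_j\le\frac{\mu^*}{64}$ and every integer $s$ with $64S\le s\le T$, $\widehat\mu_{j,s}<\frac{\mu^*}{32}$. $E:=E_1\cap E_2\cap E_3$. *)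

From mathcomp Require Import all_boot all_order all_algebra.
From mathcomp Require Import reals exp.
Set Implicit Arguments. Unset Strict Implicit. Unset Printing Implicit Defensive.
Import Order.TTheory GRing.Theory Num.Theory.
Local Open Scope ring_scope.

Definition cst {R : realType} : R := 3.

(* mu^* := max_i mu_i  (arm means are nonnegative, so 0 is a harmless seed) *)
Definition mustar {R : realType} {k : nat} (mu : 'I_k -> R) : R :=
  \big[Num.max/0]_(i < k) mu i.

Definition Sval {R : realType} {k : nat} (mu : 'I_k -> R) (T : nat) : R :=
  cst ^+ 2 * ln (T%:R) / mustar mu.

(* empirical mean of the first s pulls of arm i: (1/s) sum_{r=1}^s Y_{i,r};
   for s = 0 this is 0/0 = 0 in MathComp, so s * muhat = 0. *)
Definition muhat {R : realType} {k : nat} (Y : 'I_k -> nat -> R) (i : 'I_k) (s : nat) : R :=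
  (\sum_(1 <= r < s.+1) Y i r) / s%:R.

Definition ucount {k : nat} (U : nat -> 'I_k) (i : 'I_k) (r : nat) : nat :=
  (\sum_(1 <= r' < r.+1) (U r' == i : nat))%N.

Definition event_E1 {R : realType} {k : nat} (mu : 'I_k -> R) (T : nat) (U : nat -> 'I_k) : Prop :=
  forall r : nat, 128 * k%:R * Sval mu T <= r%:R -> (r <= T)%N ->
  forall i : 'I_k,
    r%:R / (2 * k%:R) <= (ucount U i r)%:R :> R /\
    (ucount U i r)%:R <= 3 * r%:R / (2 * k%:R) :> R.

Definition event_E2 {R : realType} {k : nat} (mu : 'I_k -> R) (T : nat) (Y : 'I_k -> nat -> R) : Prop :=
  forall i : 'I_k, mustar mu / 64 < mu i ->
  forall s : nat, 64 * Sval mu T <= s%:R -> (s <= T)%N ->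
    `|mu i - muhat Y i s| <= cst * Num.sqrt (mu i * ln (T%:R) / s%:R).

Definition event_E3 {R : realType} {k : nat} (mu : 'I_k -> R) (T : nat) (Y : 'I_k -> nat -> R) : Prop :=
  forall j : 'I_k, mu j <= mustar mu / 64 ->
  forall s : nat, 64 * Sval mu T <= s%:R -> (s <= T)%N ->
    muhat Y j s < mustar mu / 32.

Definition event_E {R : realType} {k : nat} (mu : 'I_k -> R) (T : nat)
  (Y : 'I_k -> nat -> R) (U : nat -> 'I_k) : Prop :=
  event_E1 mu T U /\ event_E2 mu T Y /\ event_E3 mu T Y.

(* Monotonicity of partial sums of nonnegative rewards reduces every n <= 192S to a
   sample size s >= n in the window [64S, 192S], where E2 and E3 apply.  There,
   since S mu* = 9 log T, either mu_i > mu*/64 and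
   s muhat_s <= s mu_i + 3 sqrt(s mu_i log T) <= (1728 + 3 sqrt 1728) log T,
   or mu_i <= mu*/64 and s muhat_s < s mu*/32 <= 54 log T. *)
From mathcomp Require Import all_boot all_order all_algebra.
From mathcomp Require Import reals exp.
From mathcomp Require Import ring lra.
Set Implicit Arguments. Unset Strict Implicit. Unset Printing Implicit Defensive.
Import Order.TTheory GRing.Theory Num.Theory.
Local Open Scope ring_scope.

Lemma ln_ge_half (R : realType) (x : R) : 2 <= x -> 1 / 2 <= ln x.
Proof.
move=> x2; have x0 : 0 < x by lra.
have := expR_ge1Dx (- ln x); rewrite expRN lnK ?posrE //.
have : x^-1 <= 2^-1 by rewrite lef_pV2 ?posrE //; lra.
lra.
Qed.

Lemma exists_nat_between (R : realType) (x : R) :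
  0 <= x -> exists m : nat, x <= m%:R <= x + 1.
Proof.
move=> x0; exists (Num.truncn x).+1.
have /andP[lo hi] := truncn_itv x0.
by apply/andP; split; [lra | move: lo; rewrite -natr1; lra].
Qed.

Lemma natr_mul_muhat (R : realType) (k : nat) (Y : 'I_k -> nat -> R) i s :
  s%:R * muhat Y i s = \sum_(1 <= r < s.+1) Y i r.
Proof.
rewrite /muhat; case: s => [|s]; first by rewrite mul0r big_geq.
by rewrite mulrC divfK // pnatr_eq0.
Qed.

Lemma natr_mul_muhat_le (R : realType) (k : nat) (Y : 'I_k -> nat -> R) i n s :
  (forall r, (1 <= r <= s)%N -> 0 <= Y i r) -> (n <= s)%N ->
  n%:R * muhat Y i n <= s%:R * muhat Y i s.
Proof.
move=> Y0 ns; rewrite !natr_mul_muhat [X in _ <= X](@big_cat_nat _ _ _ n.+1) //= ?ltnS //.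
rewrite lerDl big_nat_cond; apply: sumr_ge0 => r /andP[/andP[nr rs] _].
by apply: Y0; rewrite ltnS in rs; rewrite rs andbT (leq_trans _ nr).
Qed.

Section Window.
Variables (R : realType) (k T : nat) (mu : 'I_k -> R) (Y : 'I_k -> nat -> R).
Hypotheses (T2 : (2 <= T)%N) (mu01 : forall i, 0 <= mu i <= 1)
  (mustar_gt0 : 0 < mustar mu).

Local Notation S := (Sval mu T).
Local Notation L := (ln (T%:R : R)).
Local Notation M := (mustar mu).

Lemma ln_T_ge_half : 1 / 2 <= L.
Proof. by apply: ln_ge_half; rewrite (ler_nat R 2). Qed.

Lemma le_mustar i : mu i <= M.
Proof. exact: le_bigmax. Qed.

Lemma mustar_le1 : M <= 1.
Proof. by apply: bigmax_le => // j _; case/andP: (mu01 j). Qed.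

Lemma Sval_mul_mustar : S * M = 9 * L.
Proof. by rewrite /Sval /cst divfK ?gt_eqF //; lra. Qed.

Lemma Sval_ge : 9 / 2 <= S.
Proof.
have L12 := ln_T_ge_half; have M1 := mustar_le1; have SM := Sval_mul_mustar.
have S0 : 0 <= S.
  by apply: divr_ge0; [apply: mulr_ge0; [exact: sqr_ge0 | lra] | exact: ltW].
nra.
Qed.

Lemma exists_window_size n : n%:R <= 192 * S ->
  exists2 s : nat, (n <= s)%N & 64 * S <= s%:R <= 192 * S.
Proof.
move=> n192; have S92 := Sval_ge.
have [m /andP[m64 m65]] := @exists_nat_between R (64 * S) ltac:(lra).
exists (maxn n m); first exact: leq_maxl.
apply/andP; case: (leqP n m) => [_ | /ltnW]; first by split; lra.
by rewrite -(ler_nat R) => mn; split; lra.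
Qed.

Variable s : nat.
Hypotheses (s_window : 64 * S <= s%:R <= 192 * S) (s_le_T : (s <= T)%N).

Lemma large_arm_window_bound i : event_E2 mu T Y -> M / 64 < mu i ->
  s%:R * muhat Y i s <= 1728 * L + 126 * L.
Proof.
move=> E2 large; have [s64 s192] := andP s_window.
have := E2 i large s s64 s_le_T; rewrite /cst.
set q := Num.sqrt _ => /ler_normlP [muhat_le _].
have L0 : 0 < L by have := ln_T_ge_half; lra.
have s0 : 0 < s%:R :> R by have := Sval_ge; lra.
have mu0 : 0 <= mu i by case/andP: (mu01 i).
have sq_sq : (s%:R * q) ^+ 2 = s%:R * mu i * L.
  rewrite exprMn sqr_sqrtr; first by field; lra.
  by apply: divr_ge0; [apply: mulr_ge0|]; lra.
have smu : s%:R * mu i <= 1728 * L.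
  have : s%:R * mu i <= 192 * S * M by apply: ler_pM; rewrite ?le_mustar //; lra.
  by have := Sval_mul_mustar; lra.
have sq_le : s%:R * q <= 42 * L. (* 42 ^ 2 >= 1728 *)
  have sq0 : 0 <= s%:R * q by apply: mulr_ge0; [lra | apply: sqrtr_ge0].
  have : (s%:R * q) ^+ 2 <= 1728 * L ^+ 2 by rewrite sq_sq; nra.
  move: sq0; set x := s%:R * q; rewrite expr2; nra.
have : s%:R * muhat Y i s <= s%:R * (mu i + 3 * q) by apply: ler_wpM2l; lra.
rewrite mulrDr mulrCA; lra.
Qed.

Lemma small_arm_window_bound i : event_E3 mu T Y -> mu i <= M / 64 ->
  s%:R * muhat Y i s <= 54 * L.
Proof.
move=> E3 small; have [s64 s192] := andP s_window.
have := E3 i small s s64 s_le_T => lt32.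
have S92 := Sval_ge; have SM := Sval_mul_mustar.
have : s%:R * muhat Y i s <= s%:R * (M / 32) by apply: ler_wpM2l; lra.
have : s%:R * (M / 32) <= 192 * S * (M / 32).
  by apply: ler_wpM2r => //; rewrite divr_ge0 // ltW.
have -> : 192 * S * (M / 32) = 6 * (S * M) by field.
rewrite SM; lra.
Qed.

End Window.

Theorem lemma6 (R : realType) (k T : nat) (mu : 'I_k -> R)
  (Y : 'I_k -> nat -> R) (U : nat -> 'I_k) :
  (2 <= T)%N ->
  (forall i : 'I_k, 0 <= mu i <= 1) ->
  0 < mustar mu ->
  (forall (i : 'I_k) (s : nat), (1 <= s <= T)%N -> 0 <= Y i s <= 1) ->
  192 * Sval mu T <= T%:R ->
  event_E mu T Y U ->
  forall (i : 'I_k) (n : nat), n%:R <= 192 * Sval mu T ->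
    n%:R * muhat Y i n < 210 * cst ^+ 2 * ln (T%:R).
Proof.
move=> T2 mu01 M0 Y01 ST [_ [E2 E3]] i n n192.
have [s ns s_window] := exists_window_size T2 mu01 M0 n192.
have sT : (s <= T)%N by rewrite -(ler_nat R); case/andP: s_window; lra.
have Y0 r : (1 <= r <= s)%N -> 0 <= Y i r.
  case/andP=> r1 rs; have rT : (1 <= r <= T)%N by rewrite r1 (leq_trans rs sT).
  by case/andP: (Y01 i r rT).
apply: le_lt_trans (natr_mul_muhat_le Y0 ns) _.
have L0 : 0 < ln (T%:R : R) by have := ln_T_ge_half R T2; lra.
have -> : 210 * cst ^+ 2 * ln (T%:R : R) = 1890 * ln T%:R by rewrite /cst; ring.
case: (ltrP (mustar mu / 64) (mu i)) => arm.
- by have := large_arm_window_bound T2 mu01 M0 s_window sT E2 arm; lra.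
- by have := small_arm_window_bound T2 mu01 M0 s_window sT E3 arm; lra.
Qed.
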